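(* Let $B = M \cup \{\omega_1,\ldots,\omega_p\}$ with $p\ge 1$ and $\omega_1,\ldots,\omega_p \in P_2\setminus M$, where gates computing functions of $M$ have weight $0$ and gates computing $\omega_1,\ldots,\omega_p$ have weight $1$. Then there exists a constant $c(B)$ (depending only on $B$) such that for every finite system $F=\{f_1(x_1,\ldots,x_n),\ldots,f_m(x_1,\ldots,x_n)\}$ of Boolean functions $$\left\lceil \log_2 (d(F)+1)\right\rceil - c(B) \;\le\; I_B(F) \;\le\; \left\lceil \log_2 (d(F)+1)\right\rceil .$$
   Context: $P_2$ denotes the set of all Boolean functions and $M\subset P_2$ the set of all monotone Boolean functions (including the constants). Tuples in $E_2^n=\{0,1\}^n$ are compared componentwise: $\tilde\alpha\le\tilde\beta$ iff $\alpha_j\le\beta_j$ for all $j$. An increasing chain is a sequence of pairwise distinct tuples $\tilde\alpha_1,\ldots,\tilde\alpha_r\in E_2^n$ with $\tilde\alpha_i\le\tilde\alpha_{i+1}$ for $i=1,\ldots,r-1$. For a Boolean function $f$ of $x_1,\ldots,x_n$, an ordered pair $(\tilde\alpha,\tilde\beta)$ of tuples with $\tilde\alpha\le\tilde\beta$ and $f(\tilde\alpha)>f(\tilde\beta)$ is a jump of $f$; for a system $F$ of functions of $x_1,\ldots,x_n$, a pair is a jump of $F$ if it is a jump of some $f\in F$. For a chain $C=(\tilde\alpha_1,\ldots,\tilde\alpha_r)$, the decrease $d_C(F)$ is the number of indices $i$ such that $(\tilde\alpha_i,\tilde\alpha_{i+1})$ is a jump of $F$, and the decrease $d(F)$ is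 the maximum of $d_C(F)$ over all chains $C$ (for a single function $f$, $d(f)=d(\{f\})$). A circuit over $B$ is a Boolean circuit (directed acyclic graph of gates with inputs $x_1,\ldots,x_n$) each of whose gates computes a function of $B$; it realizes $F$ if each $f_i$ is computed at some gate or input. Its weight is the number of gates computing functions among $\omega_1,\ldots,\omega_p$. The inversion complexity $I_B(F)$ is the minimum weight of a circuit over $B$ realizing $F$. *)

From mathcomp Require Import all_boot.
Set Implicit Arguments. Unset Strict Implicit. Unset Printing Implicit Defensive.

Definition bvec (n : nat) := {ffun 'I_n -> bool}.
Definition boolfun (n : nat) := {ffun bvec n -> bool}.

Definition ble n (a b : bvec n) : bool := [forall i, a i ==> b i].

Definition monotone n (f : boolfun n) : Prop :=
  forall a b : bvec n, ble a b -> f a <= f b.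

Definition bfun := {k : nat & boolfun k}.

Definition is_jump n (f : boolfun n) (a b : bvec n) : bool :=
  ble a b && (f a && ~~ f b).
Definition is_jumpF n (F : seq (boolfun n)) (a b : bvec n) : bool :=
  has (fun f => is_jump f a b) F.
Definition is_chain n (s : seq (bvec n)) : bool := uniq s && sorted (@ble n) s.
Definition dC n (F : seq (boolfun n)) (s : seq (bvec n)) : nat :=
  count (fun ab => is_jumpF F ab.1 ab.2) (zip s (behead s)).
Definition is_decrease n (F : seq (boolfun n)) (d : nat) : Prop :=
  (exists2 s, is_chain s & dC F s = d) /\
  (forall s, is_chain s -> dC F s <= d).

(* A gate: a function of some arity k, and for each argument position a node
   index; node i < n is the input x_(i+1), node n + j is the j-th gate. *)
Record gate := Gate {
  g_ar : nat;
  g_fun : boolfun g_ar;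
  g_in : {ffun 'I_g_ar -> nat} }.

Definition circuit := seq gate.

(* every gate only reads inputs or earlier gates (acyclicity) *)
Fixpoint wf_from (m : nat) (C : circuit) : bool :=
  if C is g :: C' then [forall i, g_in g i < m] && wf_from m.+1 C' else true.
Definition wf_circuit (n : nat) (C : circuit) : bool := wf_from n C.

Definition eval_gate (vals : seq bool) (g : gate) : bool :=
  g_fun g [ffun i => nth false vals (g_in g i)].
Definition eval n (C : circuit) (x : bvec n) : seq bool :=
  foldl (fun vals g => rcons vals (eval_gate vals g)) [seq x i | i <- enum 'I_n] C.

Definition in_omegas (om : seq bfun) (g : gate) : bool :=
  Tagged boolfun (g_fun g) \in om.
Definition gate_over (om : seq bfun) (g : gate) : Prop :=
  monotone (g_fun g) \/ in_omegas om g.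
Definition circuit_over n (om : seq bfun) (C : circuit) : Prop :=
  wf_circuit n C /\ forall j, j < size C -> gate_over om (nth (@Gate 0 [ffun _ => false] [ffun _ => 0]) C j).

Definition weight (om : seq bfun) (C : circuit) : nat := count (in_omegas om) C.

Definition realizes n (C : circuit) (F : seq (boolfun n)) : Prop :=
  forall f, f \in F -> exists2 v, v < n + size C &
    forall x : bvec n, f x = nth false (eval C x) v.

(* ceil(log2 k) for k >= 1 *)
Definition ceil_log2 (k : nat) : nat := up_log 2 k.

(* Lower bound: along a chain of inputs, a gate computing a monotone function never
   drops from 1 to 0. Splitting a chain according to the output of a gate computing an
   omega, which can change at most [K] times along a chain if [K] bounds the arities of
   the omegas, shows by induction on the circuit that at most [K * (2^w - 1)] steps of a
   chain make some node drop, [w] being the weight. Every jump of [F] is such a step, so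
   [d(F) + 1 <= 2^(w + K)].
   Upper bound (Markov): [level x = d(F) - (largest decrease of a chain starting at x)] is
   monotone, below [2^k] with [k = ceil(log2(d(F)+1))], and strictly increases across every
   jump of [F]. Compute its bits from the most significant one, each by a monotone gate
   followed by one omega-gate negating it. Each bit, and each function of [F], is then a
   monotone function of the inputs and of the negations of the higher bits, so a single
   monotone gate computes it. *)

From mathcomp Require Import all_boot zify.
Set Implicit Arguments. Unset Strict Implicit. Unset Printing Implicit Defensive.

Section CountAdj.
Variable T : Type.
Implicit Types (Q R : T -> T -> bool) (s : seq T).

Fixpoint count_adj R s : nat :=
  if s is a :: s' then (if s' is b :: _ then R a b else false) + count_adj R s'
  else 0.

Lemma count_adjE R s : count (fun ab => R ab.1 ab.2) (zip s (behead s)) = count_adj R s.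
Proof. by elim: s => // a [|b s] //= ->. Qed.

Lemma count_adj_cons2 R a b s : count_adj R [:: a, b & s] = R a b + count_adj R (b :: s).
Proof. by []. Qed.

Lemma count_adj_cons_le R a s : count_adj R (a :: s) <= (count_adj R s).+1.
Proof. by case: s => [|b s] //=; case: (R a b). Qed.

Lemma count_adj_pred0 s : count_adj (fun _ _ => false) s = 0.
Proof. by elim: s => // a s /= ->; case: s. Qed.

Lemma sub_count_adj Q R R' s : sorted Q s ->
  (forall a b, Q a b -> R a b -> R' a b) -> count_adj R s <= count_adj R' s.
Proof.
move=> + sub; elim: s => // a [|b s] IH //= /andP[Qab Qs].
by apply: leq_add; [case: (R a b) (sub a b Qab) => // -> | exact: IH].
Qed.

Lemma count_adj_filter R (P : pred T) s :
  count_adj R s <= count_adj R (filter P s) + count_adj R (filter (predC P) s)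
                   + count_adj (fun a b => P a != P b) s.
Proof.
elim: s => // a s IH; case: s IH => [|b s] IH; first by case: (P a).
rewrite count_adj_cons2 [count_adj (fun a b => P a != P b) _]count_adj_cons2.
have R01 : R a b <= 1 by case: (R a b).
have cP := count_adj_cons_le R a (filter P (b :: s)).
have cN := count_adj_cons_le R a (filter (predC P) (b :: s)).
move: IH cP cN; rewrite [filter _ (a :: _)]/= [filter (predC P) (a :: _)]/=.
case Pa: (P a); case Pb: (P b) => /=; rewrite ?Pb /= ?count_adj_cons2; lia.
Qed.

Lemma count_adj_potential (f : T -> nat) a s :
  path (fun a b => f a <= f b) a s ->
  count_adj (fun a b => f a < f b) (a :: s) + f a <= f (last a s).
Proof.
elim: s a => [|b s IH] a /=; first by rewrite addn0.
case/andP=> fab /IH /=; case: ltnP fab => /=; lia.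
Qed.
End CountAdj.

Lemma count_adj_map (T U : Type) (f : U -> T) R (s : seq U) :
  count_adj R (map f s) = count_adj (fun x y => R (f x) (f y)) s.
Proof. by elim: s => // a s IH; case: s IH => //= b s ->. Qed.

Section BoolVectors.
Variable k : nat.
Implicit Types u v w : bvec k.

Lemma bleP u v : reflect (forall i, u i ==> v i) (ble u v).
Proof. exact: forallP. Qed.

Lemma ble_refl u : ble u u.
Proof. by apply/bleP => i; apply: implybb. Qed.

Lemma ble_trans : transitive (@ble k).
Proof.
move=> v u w /bleP uv /bleP vw; apply/bleP => i.
by apply/implyP => /(implyP (uv i)) /(implyP (vw i)).
Qed.

Lemma ble_anti u v : ble u v -> ble v u -> u = v.
Proof.
move=> /bleP uv /bleP vu; apply/ffunP => i.
by move: (uv i) (vu i); case: (u i); case: (v i).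
Qed.

Definition popcount u := #|[set i | u i]|.

Lemma popcount_le u : popcount u <= k.
Proof. by rewrite -[k]card_ord max_card. Qed.

Lemma popcount_mono u v : ble u v -> popcount u <= popcount v.
Proof.
move=> /bleP uv; apply: subset_leq_card; apply/subsetP => i.
by rewrite !inE; apply/implyP.
Qed.

Lemma popcount_lt u v : ble u v -> u != v -> popcount u < popcount v.
Proof.
move=> uv neq_uv; apply: proper_card; rewrite properE; apply/andP; split.
  by apply/subsetP => i; rewrite !inE; apply/implyP; move/bleP: uv.
apply: contra neq_uv => /subsetP vu; apply/eqP/ble_anti => //.
by apply/bleP => i; apply/implyP => vi; have := vu i; rewrite !inE; apply.
Qed.

(* A change of [f] along a chain needs a strictly larger set of ones. *)
Lemma count_adj_changes (f : boolfun k) (s : seq (bvec k)) :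
  sorted (@ble k) s -> count_adj (fun u v => f u != f v) s <= k.
Proof.
move=> sorted_s.
have changes_popcount : count_adj (fun u v => f u != f v) s <=
    count_adj (fun u v => popcount u < popcount v) s.
  apply: sub_count_adj sorted_s _ => u v uv fuv /=.
  by apply: (popcount_lt uv); apply: contra_neq fuv => ->.
apply: leq_trans changes_popcount _; case: s sorted_s => // u s path_s.
have := count_adj_potential (sub_path popcount_mono path_s).
by have := popcount_le (last u s); lia.
Qed.
End BoolVectors.

(** * Node values along a chain: the lower bound *)

Lemma leq_implyb (x y : bool) : (x <= y) = (x ==> y).
Proof. by case: x; case: y. Qed.

Definition bits_le : rel (seq bool) := all2 implb.

Lemma bits_le_size a b : bits_le a b -> size a = size b.
Proof. by elim: a b => [|x a IH] [|y b] //= /andP[_ /IH ->]. Qed.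

Lemma bits_le_nth a b : bits_le a b -> forall i, nth false a i ==> nth false b i.
Proof.
elim: a b => [|x a IH] [|y b] //=; first by move=> _ i; rewrite nth_nil.
by case/andP=> xy ab [|i] //; apply: IH.
Qed.

Lemma bits_leI a b : size a = size b -> (forall i, nth false a i ==> nth false b i) ->
  bits_le a b.
Proof.
elim: a b => [|x a IH] [|y b] //= [eq_ab] ab.
by rewrite (ab 0) (IH b eq_ab (fun i => ab i.+1)).
Qed.

Lemma bits_le_trans : transitive bits_le.
Proof.
move=> b a c ab bc; apply: bits_leI => [|i].
  by rewrite (bits_le_size ab) (bits_le_size bc).
by apply/implyP => /(implyP (bits_le_nth ab i)) /(implyP (bits_le_nth bc i)).
Qed.

Lemma bits_le_rcons a b x y : bits_le a b -> x ==> y -> bits_le (rcons a x) (rcons b y).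
Proof.
move=> ab xy; apply: bits_leI => [|i]; first by rewrite !size_rcons (bits_le_size ab).
by rewrite !nth_rcons -(bits_le_size ab); case: ltngtP => // _; apply: bits_le_nth.
Qed.

Definition inputs n (x : bvec n) : seq bool := [seq x i | i <- enum 'I_n].

Lemma size_inputs n (x : bvec n) : size (inputs x) = n.
Proof. by rewrite size_map size_enum_ord. Qed.

Lemma nth_inputs n (x : bvec n) (i : 'I_n) : nth false (inputs x) i = x i.
Proof. by rewrite (nth_map i) ?size_enum_ord // nth_ord_enum. Qed.

Lemma bits_le_inputs n (x y : bvec n) : ble x y -> bits_le (inputs x) (inputs y).
Proof.
move=> /bleP xy; apply: bits_leI => [|j]; first by rewrite !size_inputs.
case: (ltnP j n) => [lt_jn | le_nj]; last by rewrite !nth_default ?size_inputs.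
by rewrite -[j]/(val (Ordinal lt_jn)) !nth_inputs.
Qed.

Definition gate_input (g : gate) (vals : seq bool) : bvec (g_ar g) :=
  [ffun i => nth false vals (g_in g i)].

Lemma eval_gateE g vals : eval_gate vals g = g_fun g (gate_input g vals).
Proof. by []. Qed.

Lemma ble_gate_input g a b : bits_le a b -> ble (gate_input g a) (gate_input g b).
Proof. by move=> ab; apply/bleP => i; rewrite !ffunE; apply: bits_le_nth. Qed.

Definition eval_from (C : circuit) (vals : seq bool) : seq bool :=
  foldl (fun vals g => rcons vals (eval_gate vals g)) vals C.

Lemma eval_from_rcons C g vals :
  eval_from (rcons C g) vals = rcons (eval_from C vals) (eval_gate (eval_from C vals) g).
Proof. exact: foldl_rcons. Qed.

Lemma count_adj_gate_changes g s : sorted bits_le s ->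
  count_adj (fun a b => eval_gate a g != eval_gate b g) s <= g_ar g.
Proof.
move=> sorted_s; rewrite -(count_adj_map (gate_input g) (fun u v => g_fun g u != g_fun g v)).
apply: count_adj_changes; rewrite sorted_map.
by apply: sub_sorted sorted_s => a b; apply: ble_gate_input.
Qed.

Definition dgate := @Gate 0 [ffun _ => false] [ffun _ => 0].

Definition max_arity (om : seq bfun) : nat := \max_(w <- om) tag w.

Lemma count_drops_weight om C s :
  (forall j, j < size C -> gate_over om (nth dgate C j)) -> sorted bits_le s ->
  count_adj (fun a b => ~~ bits_le (eval_from C a) (eval_from C b)) s + max_arity om
    <= max_arity om * 2 ^ weight om C.
Proof.
elim: C s => [|g C IH] s overC sorted_s.
  have no_drop : count_adj (fun a b => ~~ bits_le (eval_from [::] a) (eval_from [::] b)) s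
                   <= count_adj (fun _ _ => false) s.
    by apply: sub_count_adj sorted_s _ => a b ->.
  by move: no_drop; rewrite count_adj_pred0 leqn0 => /eqP ->; rewrite muln1.
pose ext a := rcons a (eval_gate a g).
have overC' j : j < size C -> gate_over om (nth dgate C j) := overC j.+1.
have IHext (A : pred (seq bool)) :
    {in A &, forall a b, bits_le a b -> bits_le (ext a) (ext b)} ->
    count_adj (fun a b => ~~ bits_le (eval_from (g :: C) a) (eval_from (g :: C) b))
      (filter A s) + max_arity om <= max_arity om * 2 ^ weight om C.
  move=> ext_mono; have := IH (map ext (filter A s)) overC'; rewrite count_adj_map; apply.
  rewrite sorted_map; apply: (sub_in_sorted ext_mono (filter_all A s)).
  exact: (sorted_filter bits_le_trans A sorted_s).
have weightE : weight om (g :: C) = in_omegas om g + weight om C by [].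
case om_g: (in_omegas om g) weightE => weightE.
- pose P a := eval_gate a g.
  have const_ext (A : pred (seq bool)) c : (forall a, A a -> eval_gate a g = c) ->
      {in A &, forall a b, bits_le a b -> bits_le (ext a) (ext b)}.
    move=> AP a b Aa Ab ab; apply: (bits_le_rcons ab).
    by rewrite (AP a Aa) (AP b Ab) implybb.
  have IH1 := IHext _ (const_ext P true (fun a => id)).
  have IH0 := IHext _ (const_ext (predC P) false (fun a => @negbTE _)).
  have changes : count_adj (fun a b => P a != P b) s <= max_arity om.
    exact: leq_trans (count_adj_gate_changes g sorted_s) (leq_bigmax_seq _ om_g _).
  have := count_adj_filter
    (fun a b => ~~ bits_le (eval_from (g :: C) a) (eval_from (g :: C) b)) P s.
  by rewrite weightE expnS; lia.
- have mono_g : monotone (g_fun g) by case: (overC 0 isT) => //=; rewrite om_g.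
  rewrite weightE -(filter_predT s); apply: IHext => a b _ _ ab.
  by apply: (bits_le_rcons ab); rewrite -leq_implyb; exact: mono_g (ble_gate_input g ab).
Qed.

Lemma lower_bound om n (F : seq (boolfun n)) d (C : circuit) :
  is_decrease F d -> circuit_over n om C -> realizes C F ->
  ceil_log2 d.+1 <= weight om C + max_arity om.
Proof.
move=> [[s /andP[_ sorted_s] dC_s] _] [_ overC] realizes_F.
have jump_drop : d <= count_adj (fun a b => ~~ bits_le (eval_from C a) (eval_from C b))
                                (map (@inputs n) s).
  rewrite -dC_s /dC count_adjE count_adj_map.
  apply: sub_count_adj sorted_s _ => x y _ /hasP[f F_f /andP[_ /andP[fx fy]]].
  have [v _ fE] := realizes_F f F_f.
  by apply: contra fy => xy; have := bits_le_nth xy v; rewrite -!fE fx.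
have := count_drops_weight (s := map (@inputs n) s) overC.
rewrite sorted_map (sub_sorted (@bits_le_inputs n) sorted_s) => /(_ isT) drops.
rewrite /ceil_log2; apply: up_log_min => //.
have := ltn_expl (max_arity om) (isT : 1 < 2).
have := expn_gt0 2 (weight om C); rewrite expnD; nia.
Qed.

(** * The level function *)

Section Level.
Variables (n : nat) (F : seq (boolfun n)).

Fixpoint dec_within (t : nat) (x : bvec n) : nat :=
  if t is t'.+1 then \max_(y | ble x y && (y != x)) (is_jumpF F x y + dec_within t' y)
  else 0.

Lemma dec_withinS t x :
  dec_within t.+1 x = \max_(y | ble x y && (y != x)) (is_jumpF F x y + dec_within t y).
Proof. by []. Qed.

(* A chain from [x] has at most [n - popcount x] steps, so [n] steps of fuel suffice. *)
Lemma dec_within_stable t x : n - popcount x <= t -> dec_within t.+1 x = dec_within t x.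
Proof.
have down (x' y : bvec n) : ble x' y -> y != x' -> n - popcount y < n - popcount x'.
  move=> xy neq_yx; have := popcount_le y.
  by have := popcount_lt xy; rewrite eq_sym neq_yx => /(_ isT); lia.
elim: t x => [|t IH] x le_t.
  apply/eqP; rewrite /= -leqn0; apply/bigmax_leqP => y /andP[xy neq_yx].
  by have := down _ _ xy neq_yx; lia.
apply: eq_bigr => y /andP[xy neq_yx]; congr (_ + _); apply: IH.
by have := down _ _ xy neq_yx; lia.
Qed.

Definition dec_from x := dec_within n x.

Lemma dec_from_step x y : ble x y -> y != x -> is_jumpF F x y + dec_from y <= dec_from x.
Proof.
move=> xy neq_yx; rewrite /dec_from -(dec_within_stable (leq_subr (popcount x) n)) dec_withinS.
by apply: (leq_bigmax_cond (P := fun y => ble x y && (y != x))); rewrite xy neq_yx.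
Qed.

Lemma dec_within_chain t x : exists2 s, is_chain (x :: s) & dec_within t x <= dC F (x :: s).
Proof.
elim: t x => [|t IH] x; first by exists [::].
case: (pickP (fun y => ble x y && (y != x))) => [y0 Py0|none]; last first.
  by exists [::] => //; rewrite dec_withinS big_pred0.
rewrite dec_withinS (bigmax_eq_arg y0 Py0).
set y := [arg max_(i > y0 | _) _]; have /andP[xy neq_yx] : ble x y && (y != x).
  by rewrite /y; case: arg_maxnP.
have [s /andP[uniq_ys sorted_ys] dec_y] := IH y.
exists (y :: s); last by rewrite /dC count_adjE count_adj_cons2 -count_adjE leq_add2l.
apply/andP; split; last by rewrite /= xy; exact: sorted_ys.
rewrite cons_uniq uniq_ys andbT inE negb_or eq_sym neq_yx /=.
apply/negP => s_x; move: neq_yx; rewrite (ble_anti xy) ?eqxx //.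
by move/allP: (order_path_min (@ble_trans n) sorted_ys); apply.
Qed.

Variables (d : nat) (decF : is_decrease F d).

Lemma dec_from_le x : dec_from x <= d.
Proof.
have [s chain_s dec_s] := dec_within_chain n x.
by apply: leq_trans dec_s _; case: decF => _; apply.
Qed.

Definition level x := d - dec_from x.

Lemma level_le x : level x <= d.
Proof. exact: leq_subr. Qed.

Lemma level_mono x y : ble x y -> level x <= level y.
Proof.
move=> xy; case: (eqVneq y x) => [-> // | neq_yx].
by have := dec_from_step xy neq_yx; have := dec_from_le x; rewrite /level; lia.
Qed.

Lemma level_jump f x y : f \in F -> ble x y -> f x -> ~~ f y -> level x < level y.
Proof.
move=> F_f xy fx fy; have neq_yx : y != x by apply: contraNneq fy => ->.
have jump : is_jumpF F x y by apply/hasP; exists f; rewrite // /is_jump xy fx.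
by have := dec_from_step xy neq_yx; have := dec_from_le x; rewrite jump /level; lia.
Qed.
End Level.

(** * Markov's circuit: the upper bound *)

Definition bit i m := odd (m %/ 2 ^ i).

Lemma bit0 m : bit 0 m = odd m.
Proof. by rewrite /bit expn0 divn1. Qed.

Lemma bitS i m : bit i.+1 m = bit i m./2.
Proof. by rewrite /bit expnS divnMA divn2. Qed.

Lemma leq_bits K u v : u < 2 ^ K -> v < 2 ^ K ->
  (forall j, j < K -> bit j u <= bit j v) -> u <= v.
Proof.
elim: K u v => [|K IH] u v; first by rewrite expn0; lia.
rewrite expnS => lt_u lt_v le_bits.
have half_le : u./2 <= v./2.
  apply: IH => [|| j lt_jK]; rewrite -?bitS ?le_bits //; rewrite -divn2 ltn_divLR //; lia.
have := le_bits 0 isT; rewrite !bit0 => le_odd.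
by rewrite -[u]odd_double_half -[v]odd_double_half -!muln2; lia.
Qed.

Lemma bit_divn i j m : bit j (m %/ 2 ^ i) = bit (i + j) m.
Proof. by rewrite /bit -divnMA -expnD. Qed.

Lemma odd_leq_high K u v : u <= v -> u < 2 ^ K.+1 -> v < 2 ^ K.+1 ->
  (forall j, 0 < j < K.+1 -> bit j v <= bit j u) -> odd u <= odd v.
Proof.
rewrite expnS => le_uv lt_u lt_v high.
have half_ge : v./2 <= u./2.
  apply: (@leq_bits K) => [|| j lt_jK]; rewrite -?bitS ?high //; rewrite -divn2 ltn_divLR //; lia.
have half_le : u./2 <= v./2 by rewrite -!divn2 leq_div2r.
by move: le_uv; rewrite -[u]odd_double_half -[v]odd_double_half -!muln2; lia.
Qed.

Lemma bit_leq_high K i u v : i < K -> u <= v -> u < 2 ^ K -> v < 2 ^ K ->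
  (forall j, i < j < K -> bit j v <= bit j u) -> bit i u <= bit i v.
Proof.
move=> lt_iK le_uv lt_u lt_v high.
have lt_div w : w < 2 ^ K -> w %/ 2 ^ i < 2 ^ (K - i.+1).+1.
  by rewrite ltn_divLR ?expn_gt0 // -expnD; have -> : (K - i.+1).+1 + i = K by lia.
rewrite /bit.
apply: (@odd_leq_high (K - i.+1)); rewrite ?leq_div2r ?lt_div // => j lt_j.
by rewrite !bit_divn; apply: high; lia.
Qed.

(* Gates [0] and [1] of Markov's circuit are the constants; bit [j] of [level], most
   significant first, is computed by gate [(k.-1 - j).*2 + 2] and negated by the next
   gate; the functions of [F] come last, from gate [k.+1.*2] on. *)
Inductive node_kind := Const of bool | Bit of nat | NegBit of nat | Out of nat.

Definition kind_at (k p : nat) : node_kind :=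
  if p < 2 then Const (p == 1)
  else if p < k.+1.*2 then
    if odd p then NegBit (k.-1 - (p - 3)./2) else Bit (k.-1 - (p - 2)./2)
  else Out (p - k.+1.*2).

Lemma double_half_subn c p : c <= p -> odd p = odd c -> ((p - c)./2).*2 + c = p.
Proof.
move=> le_cp odd_pc; have := odd_double_half (p - c).
by rewrite oddB // odd_pc addbb; lia.
Qed.

Section KindAt.
Variable k : nat.

Lemma kind_at_Bit j : j < k -> kind_at k ((k.-1 - j).*2 + 2) = Bit j.
Proof.
move=> lt_jk; rewrite /kind_at addn2 /= ifT; last by rewrite -!muln2; lia.
by rewrite negbK odd_double -addn2 addnK doubleK; congr Bit; lia.
Qed.

Lemma kind_at_NegBit j : j < k -> kind_at k ((k.-1 - j).*2 + 3) = NegBit j.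
Proof.
move=> lt_jk; rewrite /kind_at addn3 /= ifT; last by rewrite -!muln2; lia.
by rewrite negbK odd_double -addn3 addnK doubleK; congr NegBit; lia.
Qed.

Lemma kind_at_Out q : kind_at k (k.+1.*2 + q) = Out q.
Proof. by rewrite /kind_at ifF ?ifF ?addKn //; rewrite -!muln2; lia. Qed.

Lemma kind_at_BitP p j : kind_at k p = Bit j -> p = (k.-1 - j).*2 + 2 /\ j < k.
Proof.
rewrite /kind_at; case: ltnP => // le2p; case: ltnP => // lt_p.
case: ifP => // even_p [<-]; rewrite -[in LHS](double_half_subn le2p) ?even_p //.
by move: lt_p; rewrite -[in X in X -> _](double_half_subn le2p) ?even_p // -!muln2; lia.
Qed.

Lemma kind_at_NegBitP p j : kind_at k p = NegBit j -> p = (k.-1 - j).*2 + 3 /\ j < k.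
Proof.
rewrite /kind_at; case: ltnP => // le2p; case: ltnP => // lt_p.
case: ifP => // odd_p [<-]; have le3p : 3 <= p by move: le2p odd_p; case: p {lt_p} => [|[|[]]].
rewrite -[in LHS](double_half_subn le3p) ?odd_p //.
by move: lt_p; rewrite -[in X in X -> _](double_half_subn le3p) ?odd_p // -!muln2; lia.
Qed.

Lemma kind_at_OutP p q : kind_at k p = Out q -> p = k.+1.*2 + q.
Proof.
rewrite /kind_at; case: ltnP => // le2p; case: ltnP => [_ | le_p [<-]].
  by case: ifP.
by rewrite subnKC.
Qed.
End KindAt.

Section MonoExt.
Variables (T : finType) (m : nat) (phi : T -> bvec m) (t : pred T).

Definition mono_ext : boolfun m := [ffun v => [exists x, ble (phi x) v && t x]].

Lemma mono_ext_monotone : monotone mono_ext.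
Proof.
move=> v v' vv'; rewrite !ffunE leq_implyb; apply/implyP => /existsP[x /andP[xv tx]].
by apply/existsP; exists x; rewrite (ble_trans xv vv') tx.
Qed.

Lemma mono_extE x : (forall y, ble (phi y) (phi x) -> t y -> t x) -> mono_ext (phi x) = t x.
Proof.
move=> t_mono; rewrite ffunE; apply/existsP/idP => [[y /andP[yx ty]] | tx].
  exact: t_mono yx ty.
by exists x; rewrite ble_refl tx.
Qed.
End MonoExt.

Lemma wf_from_nth (C : circuit) m :
  (forall p, p < size C -> [forall i, g_in (nth dgate C p) i < m + p]) -> wf_from m C.
Proof.
elim: C m => //= g C IH m wf_C; apply/andP; split; first by have := wf_C 0 isT; rewrite addn0.
by apply: IH => p lt_p; rewrite addSnnS; apply: wf_C p.+1 lt_p.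
Qed.

Section MarkovCircuit.
Variables (n : nat) (F : seq (boolfun n)) (d : nat).
Hypothesis decF : is_decrease F d.
Variables (kw : nat) (w : boolfun kw) (a b : bvec kw).
Hypotheses (ab : ble a b) (wa : w a) (wb : ~~ w b).

Let k := ceil_log2 d.+1.
Let N := k.+1.*2 + size F.

Definition bitf j (x : bvec n) := bit j (level F d x).

Definition target p (x : bvec n) : bool :=
  match kind_at k p with
  | Const c => c
  | Bit j => bitf j x
  | NegBit j => ~~ bitf j x
  | Out q => nth [ffun _ => false] F q x
  end.

Definition node_val j (x : bvec n) : bool :=
  if j < n then nth false (inputs x) j else target (j - n) x.

Definition prefix p (x : bvec n) : bvec (n + p) := [ffun j : 'I_(n + p) => node_val j x].

Definition mono_gate p := @Gate (n + p) (mono_ext (prefix p) (target p)) [ffun j => val j].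

(* Node [n + c] carries the constant [c] and node [(n + p).-1] the bit that gate [p] negates. *)
Definition neg_gate p := @Gate kw w [ffun i => if a i == b i then n + a i else (n + p).-1].

Definition markov_gate p := if kind_at k p is NegBit _ then neg_gate p else mono_gate p.

Definition markov_circuit := mkseq markov_gate N.

Lemma node_val_input (i : 'I_n) x : node_val i x = x i.
Proof. by rewrite /node_val ltn_ord nth_inputs. Qed.

Lemma node_val_gate p x : node_val (n + p) x = target p x.
Proof. by rewrite /node_val ltnNge leq_addr addKn. Qed.

Lemma level_lt x : level F d x < 2 ^ k.
Proof. by apply: leq_trans (up_logP _ (isT : 1 < 2)); rewrite ltnS level_le. Qed.

Section Prefix.
Variables (p : nat) (x y : bvec n).
Hypothesis yx : ble (prefix p y) (prefix p x).

Lemma prefix_ble_inputs : ble y x.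
Proof.
apply/bleP => i; have := bleP _ _ yx (lshift p i).
by rewrite !ffunE -[val (lshift p i)]/(val i) !node_val_input.
Qed.

Lemma prefix_ble_gate q : q < p -> target q y ==> target q x.
Proof.
move=> lt_qp; have lt_nq : n + q < n + p by rewrite ltn_add2l.
by have := bleP _ _ yx (Ordinal lt_nq); rewrite !ffunE /= !node_val_gate.
Qed.

Lemma prefix_ble_negbit j : j < k -> (k.-1 - j).*2 + 3 < p -> bitf j x <= bitf j y.
Proof.
move=> lt_jk /prefix_ble_gate; rewrite /target kind_at_NegBit //.
by case: (bitf j x); case: (bitf j y).
Qed.
End Prefix.

(* The negated higher bits among the earlier nodes pin down how [level] can grow. *)
Lemma target_prefix_mono p x y : p < N -> (forall j, kind_at k p <> NegBit j) ->
  ble (prefix p y) (prefix p x) -> target p y -> target p x.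
Proof.
move=> lt_pN not_neg yx; have le_level := level_mono decF (prefix_ble_inputs yx).
rewrite /target; case E: (kind_at k p) => [c|j|j|q] //.
- have [Ep lt_jk] := kind_at_BitP E; apply/implyP; rewrite -leq_implyb.
  apply: (bit_leq_high lt_jk le_level (level_lt y) (level_lt x)) => j' /andP[lt_jj' lt_j'k].
  by have := prefix_ble_negbit yx lt_j'k; apply; rewrite Ep -!muln2; lia.
- by case: (not_neg j).
have lt_qF : q < size F by move: lt_pN; rewrite (kind_at_OutP E) /N ltn_add2l.
have ge_level : level F d x <= level F d y.
  apply: (leq_bits (level_lt x) (level_lt y)) => j lt_jk.
  by have := prefix_ble_negbit yx lt_jk; apply; rewrite (kind_at_OutP E) -!muln2; lia.
move=> fy; apply/negPn/negP => fx.
have := level_jump decF (mem_nth _ lt_qF) (prefix_ble_inputs yx) fy fx; lia.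
Qed.

Lemma target_const (c : bool) x : target c x = c.
Proof. by case: c. Qed.

Lemma markov_gate_correct p x : p < N ->
  eval_gate (mkseq (node_val^~ x) (n + p)) (markov_gate p) = target p x.
Proof.
move=> lt_pN; rewrite /markov_gate eval_gateE.
have vals_nth j : j < n + p -> nth false (mkseq (node_val^~ x) (n + p)) j = node_val j x.
  exact: nth_mkseq.
have mono_case : (forall j, kind_at k p <> NegBit j) ->
    g_fun (mono_gate p) (gate_input (mono_gate p) (mkseq (node_val^~ x) (n + p))) = target p x.
  move=> not_neg; have -> : gate_input (mono_gate p) (mkseq (node_val^~ x) (n + p)) = prefix p x.
    by apply/ffunP => j; rewrite !ffunE vals_nth ?ltn_ord.
  by apply: mono_extE => y; apply: target_prefix_mono.
case E: (kind_at k p) => [c|j|j|q]; try by apply: mono_case; rewrite E.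
have [Ep lt_jk] := kind_at_NegBitP E.
have -> : gate_input (neg_gate p) (mkseq (node_val^~ x) (n + p)) = if bitf j x then b else a.
  apply/ffunP => i; rewrite !ffunE; have := bleP _ _ ab i.
  case: eqP => [eq_ab _ | neq_ab].
    rewrite vals_nth ?node_val_gate ?target_const; first by case: (bitf j x); rewrite ?eq_ab.
    by rewrite Ep; case: (a i); lia.
  have -> : (n + p).-1 = n + ((k.-1 - j).*2 + 2) by rewrite Ep; lia.
  rewrite vals_nth ?node_val_gate /target ?kind_at_Bit //; last by rewrite Ep; lia.
  by case: (bitf j x) => /=; case: (a i) neq_ab; case: (b i).
by move: E; rewrite /target => -> /=; case: (bitf j x); rewrite ?wa ?(negbTE wb).
Qed.

Lemma eval_markov p x : p <= N ->
  eval_from (take p markov_circuit) (inputs x) = mkseq (node_val^~ x) (n + p).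
Proof.
elim: p => [|p IH] le_pN.
  rewrite take0 addn0; apply: (@eq_from_nth _ false) => [|j]; rewrite ?size_inputs ?size_mkseq //.
  by move=> lt_jn; rewrite nth_mkseq // /node_val lt_jn.
rewrite (take_nth dgate) ?size_mkseq // eval_from_rcons IH 1?ltnW // addnS mkseqS.
by rewrite nth_mkseq // markov_gate_correct // node_val_gate.
Qed.

Lemma markov_circuit_over om : Tagged boolfun w \in om -> circuit_over n om markov_circuit.
Proof.
move=> om_w; split => [|p]; last first.
  rewrite size_mkseq => lt_pN; rewrite nth_mkseq // /markov_gate.
  case: (kind_at k p) => * /=; try by left; apply: mono_ext_monotone.
  by right.
apply: wf_from_nth => p; rewrite size_mkseq => lt_pN; rewrite nth_mkseq // /markov_gate.
case E: (kind_at k p) => [c|j|j|q]; apply/forallP => i; rewrite /= ffunE //.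
have [Ep _] := kind_at_NegBitP E; rewrite Ep; case: ifP => _; [case: (a i)|]; lia.
Qed.

Lemma markov_realizes : realizes markov_circuit F.
Proof.
move=> f F_f; have lt_iF : index f F < size F by rewrite index_mem.
exists (n + (k.+1.*2 + index f F)); first by rewrite size_mkseq !ltn_add2l.
move=> x; have := eval_markov x (leqnn N); rewrite take_oversize ?size_mkseq // => evalE.
rewrite -[eval _ x]/(eval_from markov_circuit (inputs x)) evalE nth_mkseq ?ltn_add2l //.
by rewrite node_val_gate /target kind_at_Out nth_index.
Qed.

Lemma markov_weight om : (forall v, v \in om -> ~ monotone (projT2 v)) ->
  weight om markov_circuit <= k.
Proof.
move=> nonmono; rewrite /weight /markov_circuit /mkseq count_map -size_filter.
have neg_only : {subset [seq p <- iota 0 N | in_omegas om (markov_gate p)]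
                 <= [seq (k.-1 - j).*2 + 3 | j <- iota 0 k]}.
  move=> p; rewrite mem_filter /markov_gate.
  case E: (kind_at k p) => [c|j|j|q] /andP[om_p _];
    try by case: (nonmono _ om_p); apply: mono_ext_monotone.
  by have [-> lt_jk] := kind_at_NegBitP E; apply: map_f; rewrite mem_iota.
apply: leq_trans (uniq_leq_size (filter_uniq _ (iota_uniq 0 N)) neg_only) _.
by rewrite size_map size_iota.
Qed.

Lemma upper_bound om : Tagged boolfun w \in om -> (forall v, v \in om -> ~ monotone (projT2 v)) ->
  exists C : circuit, circuit_over n om C /\ realizes C F /\ weight om C <= ceil_log2 d.+1.
Proof.
move=> om_w nonmono; exists markov_circuit.
by split; [exact: markov_circuit_over | split; [exact: markov_realizes | exact: markov_weight]].
Qed.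
End MarkovCircuit.

Lemma not_monotone_jump k (f : boolfun k) :
  ~ monotone f -> exists a b, [&& ble a b, f a & ~~ f b].
Proof.
move=> nonmono; case: (boolP [exists a, exists b, [&& ble a b, f a & ~~ f b]]).
  by case/existsP=> a /existsP[b jump]; exists a, b.
rewrite negb_exists => /forallP no_jump; case: nonmono => a b ab.
move: (no_jump a); rewrite negb_exists => /forallP /(_ b); rewrite ab leq_implyb /=.
by case: (f a); case: (f b).
Qed.

Unset Implicit Arguments.

Theorem theorem1 (om : seq bfun) (Hp : 0 < size om)
    (Hnm : forall w, w \in om -> ~ monotone (projT2 w)) :
  exists c : nat, forall (n : nat) (F : seq (boolfun n)) (d : nat),
    is_decrease F d ->
    (exists C : circuit, circuit_over n om C /\ realizes C F /\
        weight om C <= ceil_log2 d.+1) /\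
    (forall C : circuit, circuit_over n om C -> realizes C F ->
        ceil_log2 d.+1 <= weight om C + c).
Proof.
exists (max_arity om) => n F d decF; split; last by move=> C; apply: lower_bound.
set w0 : bfun := Tagged boolfun [ffun _ : bvec 0 => false].
case: (nth w0 om 0) (mem_nth w0 Hp) => kw w om_w.
have [a [b /and3P[ab wa wb]]] := not_monotone_jump (Hnm _ om_w).
exact: (upper_bound decF ab wa wb om_w Hnm).
Qed.
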